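(* Let $N_t\ge 1$, let $\mathbf{g}_1,\mathbf{g}_2,\mathbf{h}_c\in\mathbb{C}^{N_t}$, let $t_1,t_2>0$, $\sigma^2>0$, $P_{\max}>0$ and $\bar R_{\min}\ge 0$, and set $\bar\gamma_{\min}=2^{\bar R_{\min}}-1$. Consider the sum-of-ratios problem $$(\mathrm{P1}):\quad \min_{\mathbf{w}\in\mathbb{C}^{N_t}}\ f(\mathbf{w})=\frac{t_1}{|\mathbf{g}_1^{\mathrm H}\mathbf{w}|^2}+\frac{t_2}{|\mathbf{g}_2^{\mathrm H}\mathbf{w}|^2}\quad\text{s.t.}\quad \log_2\!\Big(1+\frac{|\mathbf{h}_c^{\mathrm H}\mathbf{w}|^2}{\sigma^2}\Big)\ge \bar R_{\min},\qquad \mathbf{w}^{\mathrm H}\mathbf{w}\le P_{\max},$$ and the problem $$(\mathrm{P2}):\quad \min_{\mathbf{w}\in\mathbb{C}^{N_t},\ \tilde{\mathbf{y}}=(\tilde y_1,\tilde y_2)\in\mathbb{R}^2}\ \tilde F(\mathbf{w},\tilde{\mathbf{y}})=\sum_{i=1}^{2}\frac{1}{\big[\,2\tilde y_i\sqrt{|\mathbf{g}_i^{\mathrm H}\mathbf{w}|^2}-\tilde y_i^{2}\,t_i\,\big]_+}\quad\text{s.t.}\quad \mathbf{h}_c^{\mathrm H}\mathbf{w}\ge\sqrt{\sigma^2\bar\gamma_{\min}},\qquad \mathbf{w}^{\mathrm H}\mathbf{w}\le P_{\max},$$ where the constraint $\mathbf{h}_c^{\mathrm H}\mathbf{w}\ge\sqrt{\sigma^2\bar\gamma_{\min}}$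 means that $\mathbf{h}_c^{\mathrm H}\mathbf{w}$ is a real number at least $\sqrt{\sigma^2\bar\gamma_{\min}}$. Then (P1) and (P2) are equivalent: they have the same optimal value.
   Context: $[x]_+=\max\{x,0\}$, with the convention $1/[x]_+=+\infty$ when $x\le 0$, and likewise $t_i/0=+\infty$ in $f$. $(\cdot)^{\mathrm H}$ denotes conjugate transpose. In the paper's application, $\mathbf{g}_1$ is the projected sensing vector $\mathbf{h}_s$, $\mathbf{g}_2$ is the projected distance vector $\tilde{\boldsymbol{\alpha}}_{\rho_s}$, $t_i=[\tilde{\mathbf{T}}]_{(i,i)}$ are diagonal entries of a coordinate-transformation weight matrix, $\mathbf{h}_c$ is the communication channel, $\mathbf{w}$ is the beamformer and $\tilde{\mathbf{y}}$ are auxiliary variables; these interpretations are not needed for the statement. *)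

From HB Require Import structures.
From mathcomp Require Import all_boot all_order all_algebra.
From mathcomp Require Import all_classical all_reals all_analysis.
From mathcomp Require Import complex.
Set Implicit Arguments. Unset Strict Implicit. Unset Printing Implicit Defensive.
Import Order.TTheory GRing.Theory Num.Theory.
Local Open Scope ring_scope.

Section Defs.
Variable R : realType.

Definition hdot (n : nat) (g w : 'cV[R[i]]_n) : R[i] :=
  \sum_(k < n) (g k 0)^* * w k 0.

Definition cabs2 (z : R[i]) : R := complex.Re z ^+ 2 + complex.Im z ^+ 2.

Definition eratio (t a : R) : \bar R :=
  if a == 0 then +oo%E else (t / a)%:E.

(* 1 / [x]_+ with the convention 1 / [x]_+ = +oo when x <= 0 *)
Definition inv_pos (x : R) : \bar R :=
  if 0 < x then (1 / x)%:E else +oo%E.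

Definition f_P1 (n : nat) (g1 g2 : 'cV[R[i]]_n) (t1 t2 : R) (w : 'cV[R[i]]_n)
  : \bar R :=
  (eratio t1 (cabs2 (hdot g1 w)) + eratio t2 (cabs2 (hdot g2 w)))%E.

Definition feasible_P1 (n : nat) (hc : 'cV[R[i]]_n) (sigma2 Pmax Rmin : R)
  (w : 'cV[R[i]]_n) : Prop :=
  ln (1 + cabs2 (hdot hc w) / sigma2) / ln 2 >= Rmin /\
  complex.Re (hdot w w) <= Pmax.

Definition F_P2 (n : nat) (g1 g2 : 'cV[R[i]]_n) (t1 t2 : R) (w : 'cV[R[i]]_n)
  (y : R * R) : \bar R :=
  (inv_pos (2 * y.1 * Num.sqrt (cabs2 (hdot g1 w)) - y.1 ^+ 2 * t1) +
   inv_pos (2 * y.2 * Num.sqrt (cabs2 (hdot g2 w)) - y.2 ^+ 2 * t2))%E.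

Definition feasible_P2 (n : nat) (hc : 'cV[R[i]]_n) (sigma2 Pmax Rmin : R)
  (w : 'cV[R[i]]_n) : Prop :=
  complex.Im (hdot hc w) = 0 /\
  complex.Re (hdot hc w) >= Num.sqrt (sigma2 * (2 `^ Rmin - 1)) /\
  complex.Re (hdot w w) <= Pmax.

(* optimal values (infima in the extended reals; +oo if infeasible) *)
Definition optval_P1 (n : nat) (g1 g2 hc : 'cV[R[i]]_n) (t1 t2 sigma2 Pmax Rmin : R)
  : \bar R :=
  ereal_inf [set f_P1 g1 g2 t1 t2 w | w in feasible_P1 hc sigma2 Pmax Rmin].

Definition optval_P2 (n : nat) (g1 g2 hc : 'cV[R[i]]_n) (t1 t2 sigma2 Pmax Rmin : R)
  : \bar R :=
  ereal_inf [set v | exists w y, feasible_P2 hc sigma2 Pmax Rmin w /\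
                                  v = F_P2 g1 g2 t1 t2 w y].
End Defs.

From HB Require Import structures.
From mathcomp Require Import all_boot all_order all_algebra.
From mathcomp Require Import all_classical all_reals all_analysis.
From mathcomp Require Import complex.
From mathcomp Require Import ring lra.
Import Order.TTheory GRing.Theory Num.Theory.
Local Open Scope ring_scope.

(* First, the quadratic transform:
   for c >= 0 and t > 0 one has t (2 y sqrt c - y^2 t) <= c, since the
   difference is (sqrt c - y t)^2; hence t / c <= 1 / [2 y sqrt c - y^2 t]_+
   with equality at y = sqrt c / t, so minimising the objective of (P2) over y
   gives the objective of (P1).  Second, the phase of w is free: replacing w by
   c w with |c| = 1 changes neither |g_i^H w|, nor w^H w, nor |h_c^H w|, and a
   suitable c makes h_c^H w real and nonnegative.  The rate constraint of (P1)
   reads |h_c^H w|^2 >= sigma^2 gamma_min, so up to this phase it is the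
   constraint of (P2). *)

Lemma ereal_inf_le_dominated (R : realType) (A B : set (\bar R)) :
  (forall b, B b -> exists2 a, A a & (a <= b)%E) ->
  (ereal_inf A <= ereal_inf B)%E.
Proof. by move=> domAB; apply/ereal_infP => b /domAB; exact: ge_ereal_inf. Qed.

Section ComplexFacts.
Context {R : realType}.

Lemma cabs2_ge0 (z : R[i]) : 0 <= cabs2 z.
Proof. by case: z => a b; rewrite /cabs2 /=; nra. Qed.

Lemma cabs2M (x y : R[i]) : cabs2 (x * y) = cabs2 x * cabs2 y.
Proof. by case: x => a b; case: y => c d; rewrite /cabs2 /=; ring. Qed.

Lemma cabs2_real (z : R[i]) : complex.Im z = 0 -> cabs2 z = complex.Re z ^+ 2.
Proof. by rewrite /cabs2 => ->; rewrite expr0n addr0. Qed.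

Lemma conjcM_cabs2 (z : R[i]) : z^* * z = Complex (cabs2 z) 0.
Proof.
case: z => a b; apply/eqP; rewrite eq_complex /cabs2 /=.
by apply/andP; split; apply/eqP; ring.
Qed.

Lemma unit_phase_exists (z : R[i]) : exists c : R[i],
  [/\ cabs2 c = 1, complex.Im (c * z) = 0 &
      complex.Re (c * z) = Num.sqrt (cabs2 z)].
Proof.
case: z => a b; rewrite /cabs2 /=.
set r := Num.sqrt (a ^+ 2 + b ^+ 2).
have r2E : r ^+ 2 = a ^+ 2 + b ^+ 2 by rewrite sqr_sqrtr //; nra.
have [r0 | r_gt0] := leP r 0.
  have {}r0 : r = 0 by apply/le_anti; rewrite r0 sqrtr_ge0.
  have [-> ->] : a = 0 /\ b = 0 by split; nra.
  by exists 1; rewrite /= r0; split => //=; ring.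
have rN0 : r != 0 by rewrite gt_eqF.
exists (Complex (a / r) (- (b / r))); split => /=.
- have -> : (a / r) ^+ 2 + (- (b / r)) ^+ 2 = (a ^+ 2 + b ^+ 2) / r ^+ 2 by field.
  by rewrite -r2E divff // expf_neq0.
- by field.
- have -> : a / r * a - - (b / r) * b = (a ^+ 2 + b ^+ 2) / r by field.
  by rewrite -r2E; field.
Qed.

Lemma hdotZr n (g w : 'cV[R[i]]_n) (c : R[i]) :
  hdot g (c *: w) = c * hdot g w.
Proof. by rewrite /hdot mulr_sumr; apply: eq_bigr => k _; rewrite mxE; ring. Qed.

Lemma hdotZ_unit n (w : 'cV[R[i]]_n) (c : R[i]) :
  cabs2 c = 1 -> hdot (c *: w) (c *: w) = hdot w w.
Proof.
move=> c1; have : c^* * c = 1 by rewrite conjcM_cabs2 c1.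
rewrite /hdot => cc1; apply: eq_bigr => k _.
by rewrite !mxE rmorphM mulrACA -[RHS]mul1r -cc1 mulrC.
Qed.

End ComplexFacts.

Section QuadraticTransform.
Context {R : realType}.
Variables c t : R.
Hypotheses (c_ge0 : 0 <= c) (t_gt0 : 0 < t).

Lemma quadratic_transform_le (y : R) :
  t * (2 * y * Num.sqrt c - y ^+ 2 * t) <= c.
Proof.
have sqrt2 : Num.sqrt c ^+ 2 = c by rewrite sqr_sqrtr.
by have := sqr_ge0 (Num.sqrt c - t * y); nra.
Qed.

Lemma eratio_le_inv_pos (y : R) :
  (eratio t c <= inv_pos (2 * y * Num.sqrt c - y ^+ 2 * t))%E.
Proof.
rewrite /inv_pos; case: ifPn => [x_gt0|_]; last exact: leey.
have c_gt0 : 0 < c.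
  by apply: lt_le_trans (quadratic_transform_le y); rewrite mulr_gt0.
rewrite /eratio gt_eqF // lee_fin ler_pdivrMr // mulrC mulrA ler_pdivlMr //.
by rewrite mulr1; exact: quadratic_transform_le.
Qed.

Lemma inv_pos_quadratic_opt :
  inv_pos (2 * (Num.sqrt c / t) * Num.sqrt c - (Num.sqrt c / t) ^+ 2 * t)
  = eratio t c.
Proof.
have tN0 : t != 0 by rewrite gt_eqF.
have -> : 2 * (Num.sqrt c / t) * Num.sqrt c - (Num.sqrt c / t) ^+ 2 * t
          = c / t by rewrite -[in RHS](sqr_sqrtr c_ge0); field.
rewrite /inv_pos /eratio; have [-> | cN0] := eqVneq c 0; first by rewrite mul0r ltxx.
have c_gt0 : 0 < c by rewrite lt_def cN0.
by rewrite divr_gt0 //; congr (_%:E); field; rewrite cN0.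
Qed.

End QuadraticTransform.

Section Feasibility.
Context {R : realType}.
Context {n : nat}.
Variables (hc : 'cV[R[i]]_n) (sigma2 Pmax Rmin : R).
Hypothesis sigma2_gt0 : 0 < sigma2.

Lemma rate_constraintE (x : R) : 0 <= x ->
  (Rmin <= ln (1 + x / sigma2) / ln 2) = (sigma2 * (2 `^ Rmin - 1) <= x).
Proof.
move=> x_ge0; have ln2_gt0 : 0 < ln (2 : R) by apply: ln_gt0; lra.
have snr_gt0 : 0 < 1 + x / sigma2 by have := divr_ge0 x_ge0 (ltW sigma2_gt0); lra.
rewrite ler_pdivlMr // -[X in X <= ln _]expRK ler_ln ?posrE ?expR_gt0 //.
have -> : expR (Rmin * ln 2) = 2 `^ Rmin by rewrite /powR gt_eqF //; lra.
by rewrite -lerBlDl ler_pdivlMr // mulrC.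
Qed.

Lemma feasible_P1E (w : 'cV[R[i]]_n) :
  feasible_P1 hc sigma2 Pmax Rmin w <->
  sigma2 * (2 `^ Rmin - 1) <= cabs2 (hdot hc w) /\ complex.Re (hdot w w) <= Pmax.
Proof. by rewrite /feasible_P1 rate_constraintE ?cabs2_ge0. Qed.

Lemma feasible_P2_P1 (w : 'cV[R[i]]_n) :
  feasible_P2 hc sigma2 Pmax Rmin w -> feasible_P1 hc sigma2 Pmax Rmin w.
Proof.
move=> [real_hw [hw_ge power]]; apply/feasible_P1E; split => //.
rewrite cabs2_real //; set q := sigma2 * _ in hw_ge *.
have [q_le0 | q_gt0] := leP q 0; first by apply: le_trans q_le0 _; exact: sqr_ge0.
rewrite -(sqr_sqrtr (ltW q_gt0)); apply: lerXn2r => //; rewrite ?nnegrE ?sqrtr_ge0 //.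
exact: le_trans (sqrtr_ge0 _) hw_ge.
Qed.

Lemma feasible_P1_phase (w : 'cV[R[i]]_n) (c : R[i]) :
  cabs2 c = 1 -> complex.Im (c * hdot hc w) = 0 ->
  complex.Re (c * hdot hc w) = Num.sqrt (cabs2 (hdot hc w)) ->
  feasible_P1 hc sigma2 Pmax Rmin w -> feasible_P2 hc sigma2 Pmax Rmin (c *: w).
Proof.
move=> c1 real_chw chwE /feasible_P1E [rate power].
by rewrite /feasible_P2 hdotZ_unit // hdotZr chwE ler_wsqrtr.
Qed.

End Feasibility.

Section Objectives.
Context {R : realType}.
Context {n : nat} {t1 t2 : R}.
Variables g1 g2 : 'cV[R[i]]_n.
Hypotheses (t1_gt0 : 0 < t1) (t2_gt0 : 0 < t2).

Lemma f_P1_le_F_P2 (w : 'cV[R[i]]_n) (y : R * R) :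
  (f_P1 g1 g2 t1 t2 w <= F_P2 g1 g2 t1 t2 w y)%E.
Proof. by apply: leeD; apply: eratio_le_inv_pos; rewrite ?cabs2_ge0. Qed.

Lemma F_P2_opt (w : 'cV[R[i]]_n) :
  exists y, F_P2 g1 g2 t1 t2 w y = f_P1 g1 g2 t1 t2 w.
Proof.
exists (Num.sqrt (cabs2 (hdot g1 w)) / t1, Num.sqrt (cabs2 (hdot g2 w)) / t2).
by rewrite /F_P2 /f_P1 /= !inv_pos_quadratic_opt ?cabs2_ge0.
Qed.

Lemma f_P1_phase (w : 'cV[R[i]]_n) (c : R[i]) :
  cabs2 c = 1 -> f_P1 g1 g2 t1 t2 (c *: w) = f_P1 g1 g2 t1 t2 w.
Proof. by move=> c1; rewrite /f_P1 !hdotZr !cabs2M c1 !mul1r. Qed.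

End Objectives.

Theorem proposition3 (R : realType) (Nt : nat) (hNt : (1 <= Nt)%N)
  (g1 g2 hc : 'cV[R[i]]_Nt) (t1 t2 sigma2 Pmax Rmin : R)
  (ht1 : 0 < t1) (ht2 : 0 < t2) (hsigma2 : 0 < sigma2) (hPmax : 0 < Pmax)
  (hRmin : 0 <= Rmin) :
  optval_P1 g1 g2 hc t1 t2 sigma2 Pmax Rmin =
  optval_P2 g1 g2 hc t1 t2 sigma2 Pmax Rmin.
Proof.
apply/le_anti/andP; split; apply: ereal_inf_le_dominated.
- move=> _ [w [y [feas2 ->]]]; exists (f_P1 g1 g2 t1 t2 w).
    by exists w => //; exact: feasible_P2_P1.
  exact: f_P1_le_F_P2.
- move=> _ [w feas1 <-].
  have [c [c1 real_chw chwE]] := unit_phase_exists (hdot hc w).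
  have [y Fy] := F_P2_opt g1 g2 ht1 ht2 (c *: w).
  exists (F_P2 g1 g2 t1 t2 (c *: w) y); last by rewrite Fy f_P1_phase.
  by exists (c *: w), y; split=> //; exact: feasible_P1_phase.
Qed.
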